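(* Let $G$ be a DAG or MAG on $\{Y,X_1,\dots,X_d\}$ ($d\ge1$) whose skeleton is the path $Y - X_d - X_{d-1} - \cdots - X_1$, with arbitrary edge orientations. Then $N_G=d+1$.
   Context: For $A\subseteq\{1,\dots,d\}$, $\mathbf{X}_A:=\{X_i:i\in A\}$. $\perp_G$ is d-separation (m-separation for a MAG). For $S',S''\subseteq\{1,\dots,d\}$, $S'\sim_G S''$ iff there exists $S_\cap\subseteq S'\cap S''$ with $Y\perp_G\mathbf{X}_{(S'\cup S'')\setminus S_\cap}\mid\mathbf{X}_{S_\cap}$ (separation from the empty set holds trivially); this is an equivalence relation, and $N_G$ denotes the number of its equivalence classes on the power set of $\{1,\dots,d\}$. *)

From mathcomp Require Import all_boot.
From mathcomp Require Import boolp.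

Set Implicit Arguments.
Unset Strict Implicit.
Unset Printing Implicit Defensive.

(* Vertices: 'I_d.+1; vertex 0 is Y, vertex i (1 <= i <= d) is X_i.
   A mixed graph is given by two relations:
     dir u v  : directed edge u -> v
     bi  u v  : bidirected edge u <-> v                                      *)

Section MixedGraph.
Variable (n : nat) (dir bi : rel 'I_n).

Definition adj (u v : 'I_n) : bool := [|| dir u v, dir v u | bi u v].

Definition arrowhead (u v : 'I_n) : bool := dir u v || bi u v.

Definition anc (u v : 'I_n) : bool := connect dir u v.

Definition wf_mixed : Prop :=
  [/\ forall u, ~~ adj u u,
      forall u v, bi u v = bi v u,
      forall u v, ~~ (dir u v && dir v u) &
      forall u v, ~~ (dir u v && bi u v)].

Definition is_path (x y : 'I_n) (p : seq 'I_n) : Prop :=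
  exists q, [/\ p = x :: q, last x q = y, path adj x q & uniq (x :: q)].

Definition collider (a c b : 'I_n) : bool := arrowhead a c && arrowhead b c.

Fixpoint triples_ok (P : 'I_n -> 'I_n -> 'I_n -> bool) (s : seq 'I_n) : bool :=
  match s with
  | a :: ((c :: b :: _) as s') => P a c b && triples_ok P s'
  | _ => true
  end.

Definition mconnecting (Z : {set 'I_n}) (p : seq 'I_n) : bool :=
  triples_ok (fun a c b =>
    if collider a c b then [exists z in Z, anc c z] else c \notin Z) p.

Definition msep (A B Z : {set 'I_n}) : Prop :=
  forall x y p, x \in A -> y \in B -> is_path x y p -> ~~ mconnecting Z p.

Definition acyclic : Prop := forall u v, dir u v -> ~~ anc v u.

Definition is_DAG : Prop :=
  [/\ wf_mixed, forall u v, ~~ bi u v & acyclic].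

(* ancestral: no directed cycle, no almost directed cycle
   (no undirected edges are present in this representation) *)
Definition ancestral : Prop :=
  acyclic /\ forall u v, bi u v -> ~~ anc u v.

Definition maximal : Prop :=
  forall u v, u != v -> ~~ adj u v ->
    exists Z : {set 'I_n}, [/\ u \notin Z, v \notin Z & msep [set u] [set v] Z].

Definition is_MAG : Prop := [/\ wf_mixed, ancestral & maximal].

End MixedGraph.

(* skeleton  Y - X_d - X_{d-1} - ... - X_1  on 'I_d.+1 (Y = 0) *)
Definition path_skel (d : nat) (u v : 'I_d.+1) : bool :=
  let a := nat_of_ord u in let b := nat_of_ord v in
  [|| (a == 0) && (b == d), (b == 0) && (a == d),
      (0 < a) && (b == a.+1) | (0 < b) && (a == b.+1)].

Definition Yv {d : nat} : 'I_d.+1 := ord0.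
(* index j : 'I_d stands for X_{j+1} *)
Definition Xv {d : nat} (j : 'I_d) : 'I_d.+1 := lift ord0 j.

Definition simG (d : nat) (dir bi : rel 'I_d.+1) (S1 S2 : {set 'I_d}) : Prop :=
  exists Sc : {set 'I_d},
    Sc \subset S1 :&: S2 /\
    msep dir bi [set Yv] (Xv @: ((S1 :|: S2) :\: Sc)) (Xv @: Sc).

Definition N_G (d : nat) (dir bi : rel 'I_d.+1) : nat :=
  #|[set [set T : {set 'I_d} | `[< simG dir bi S T >]] | S : {set 'I_d}]|.

From mathcomp Require Import all_boot.
From mathcomp Require Import boolp.
From mathcomp Require Import zify.

Set Implicit Arguments.
Unset Strict Implicit.
Unset Printing Implicit Defensive.

(* Number the vertices along the skeleton: pathv 0 = Y and
   pathv i = X_(d+1-i), so X_(j+1) (written Xv j) sits at position d - j.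
   Since the skeleton is a path, the only path from Y to X_(a+1) is the
   segment Ypath a, and an interior vertex c of it is blocked by Z exactly
   when either c is a non-collider in Z, or c is a collider not in Z (a
   collider on a path skeleton has no children, so its only descendant is
   itself).  Writing C for the set of indices of interior colliders, this gives
     Y _|_ X_(a+1) | Xv(Sc)  <->  some j > a has (j \in Sc) != (j \in C).  Levels take every value in
   0..d, so ~_G has exactly d + 1 classes. *)

Section Levels.
Variables (d : nat) (C : {set 'I_d}).

Definition mismatch (S : {set 'I_d}) : {set 'I_d} := [set j | (j \in S) != (j \in C)].

Definition level (S : {set 'I_d}) : nat := \max_(j in mismatch S) j.+1.

Lemma level_le (S : {set 'I_d}) : level S <= d.
Proof. by apply/bigmax_leqP => j _; apply: ltn_ord. Qed.

Lemma level_leP (S : {set 'I_d}) (k : nat) :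
  reflect (forall j : 'I_d, k <= j -> (j \in S) = (j \in C)) (level S <= k).
Proof.
apply: (iffP (bigmax_leqP _ _ _)) => [below j kj | agree j].
  by apply/eqP; apply: contraTT kj => ne; rewrite -ltnNge below ?inE.
by rewrite inE => ne; rewrite ltnNge; apply: contra ne => kj; rewrite agree.
Qed.

Lemma level_gtP (S : {set 'I_d}) (a : nat) :
  reflect (exists2 j : 'I_d, a <= j & (j \in S) != (j \in C)) (a < level S).
Proof.
rewrite ltnNge; apply: (iffP negP) => [above | [j aj ne] /level_leP agree].
  case: (pickP [pred j : 'I_d | (a <= j) && ((j \in S) != (j \in C))]).
    by move=> j /andP [aj ne]; exists j.
  move=> none; case: above; apply/level_leP => j aj.
  by have := none j; rewrite /= aj /= => /negbFE/eqP.
by move: ne; rewrite agree ?eqxx.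
Qed.

Lemma level_mismatch (S : {set 'I_d}) (j : 'I_d) :
  level S = j.+1 -> (j \in S) != (j \in C).
Proof.
move=> Sj; apply/negP => /eqP agree_j.
have /level_leP top := leqnn (level S).
suff : level S <= j by rewrite Sj ltnn.
apply/level_leP => i; rewrite leq_eqVlt => /predU1P [/val_inj <- // | ji].
by apply: top; rewrite Sj.
Qed.

Lemma level_agree (S S' : {set 'I_d}) :
  (forall j : 'I_d, level S <= j.+1 -> (j \in S) = (j \in S')) -> level S' = level S.
Proof.
move=> agree; apply/eqP; rewrite eqn_leq; apply/andP; split.
  have /level_leP top := leqnn (level S).
  by apply/level_leP => j kj; rewrite -agree ?top ?(leqW kj).
case Sk: (level S) => [//|M].
have Md : M < d by rewrite -ltnS -Sk; apply: level_le.
apply/level_gtP; exists (Ordinal Md) => //.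
by rewrite -agree ?Sk // level_mismatch.
Qed.

Lemma level_top (S T : {set 'I_d}) (j : 'I_d) :
  level S = level T -> level S <= j.+1 -> (j \in S) = (j \in T).
Proof.
move=> eST; rewrite leq_eqVlt ltnS => /predU1P [Sj | Sj].
  move: (level_mismatch Sj) (level_mismatch (etrans (esym eST) Sj)).
  by case: (j \in S); case: (j \in T); case: (j \in C).
have /level_leP topS := leqnn (level S); have /level_leP topT := leqnn (level T).
by rewrite topS // topT // -eST.
Qed.

Lemma level_core (S Sc : {set 'I_d}) : Sc \subset S ->
  (forall a, a \in S :\: Sc -> a.+1 < level Sc) -> level S = level Sc.
Proof.
move=> sub low; apply: level_agree => j le.
case jSc: (j \in Sc); first by rewrite (subsetP sub).
apply/esym/negbTE/negP => jS.
by have := low j; rewrite inE jSc jS => /(_ isT); rewrite ltnNge le.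
Qed.

(* the combinatorial form of ~_G: a common core Sc dominating (S :|: T) :\: Sc
   exists iff S and T have the same level *)
Lemma level_eqP (S T : {set 'I_d}) :
  (exists Sc : {set 'I_d}, Sc \subset S :&: T /\
     forall a, a \in (S :|: T) :\: Sc -> a.+1 < level Sc) <-> level S = level T.
Proof.
split=> [[Sc [sub low]] | eST].
  rewrite (@level_core S Sc) ?(@level_core T Sc) //.
  - by apply: subset_trans sub (subsetIr _ _).
  - by move=> a; rewrite !inE => /andP [aSc aT]; apply: low; rewrite !inE aSc aT orbT.
  - by apply: subset_trans sub (subsetIl _ _).
  by move=> a; rewrite !inE => /andP [aSc aS]; apply: low; rewrite !inE aSc aS.
pose Sc := [set j in S | level S <= j.+1].
have ScE : level Sc = level S.
  by apply: level_agree => j le; rewrite inE le andbT.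
exists Sc; split.
  by apply/subsetP => j; rewrite !inE => /andP [jS le]; rewrite jS -(level_top eST le).
move=> a; rewrite !inE ScE ltnNge => /andP [aSc aST]; apply: contra aSc => le.
by rewrite le andbT; case/orP: aST => //; rewrite (level_top eST le).
Qed.

(* every value 0..d is a level (toggle C at one index) *)
Lemma level_surj (k : nat) : k <= d -> exists S, level S = k.
Proof.
case: k => [_ | m md].
  by exists C; apply/eqP; rewrite -leqn0; apply/level_leP.
exists [set j | (j \in C) != (j == Ordinal md)]; rewrite /level.
have -> : mismatch [set j | (j \in C) != (j == Ordinal md)] = [set Ordinal md].
  by apply/setP => j; rewrite !inE; case: (j \in C); case: (j == _).
by rewrite big_set1.
Qed.

End Levels.

Lemma card_fibres (A B : finType) (f : A -> B) :
  #|[set [set y | f y == f x] | x : A]| = #|[set f x | x : A]|.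
Proof.
rewrite -(card_in_imset (f := fun b => [set y | f y == b])); first by rewrite -imset_comp.
move=> _ _ /imsetP [x1 _ ->] /imsetP [x2 _ ->] /setP /(_ x1).
by rewrite !inE eqxx => /esym/eqP.
Qed.

Lemma anc_sink (n : nat) (dir bi : rel 'I_n) (c : 'I_n) : wf_mixed dir bi ->
  (forall w, adj dir bi c w -> arrowhead dir bi w c) ->
  forall z, anc dir c z = (z == c).
Proof.
move=> [_ bi_sym dir_asym dir_bi] into z.
apply/idP/eqP => [/connectP [[|w p] /=] | ->]; [by move=> _ -> | | exact: connect0].
move=> /andP [cw _] _; exfalso; have := into w; rewrite /adj /arrowhead cw => /(_ isT).
case/orP => [wc | wc]; first by have := dir_asym c w; rewrite cw wc.
by have := dir_bi c w; rewrite cw bi_sym wc.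
Qed.

Lemma triples_ok_iota (n : nat) (f : nat -> 'I_n)
    (P : 'I_n -> 'I_n -> 'I_n -> bool) (m k : nat) :
  triples_ok P (map f (iota k m.+2)) = all (fun i => P (f i) (f i.+1) (f i.+2)) (iota k m).
Proof. by elim: m k => [//|m IH] k; rewrite [RHS]/= -IH. Qed.

Lemma last_map_iota (T : Type) (f : nat -> T) (m k : nat) :
  last (f k) (map f (iota k.+1 m)) = f (k + m).
Proof. by elim: m k => [|m IH] k /=; rewrite ?addn0 // IH addSnnS. Qed.

Lemma mem_Xv (d : nat) (Z : {set 'I_d}) (i : 'I_d) : (Xv i \in Xv @: Z) = (i \in Z).
Proof. by rewrite mem_imset //; exact: lift_inj. Qed.

Lemma msep_Y_set (d : nat) (dir bi : rel 'I_d.+1) (U : {set 'I_d}) (Z : {set 'I_d.+1}) :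
  msep dir bi [set Yv] (Xv @: U) Z <->
  (forall a, a \in U -> msep dir bi [set Yv] [set Xv a] Z).
Proof.
split=> [sep a aU x y p xY | sep x y p xY /imsetP [a aU ->]].
  by rewrite inE => /eqP ->; apply: sep => //; exact: imset_f.
exact: (sep a aU x (Xv a) p xY (set11 _)).
Qed.

Section PathSkeleton.
Variables (d : nat) (dir bi : rel 'I_d.+1).
Hypothesis d_gt0 : 0 < d.
Hypothesis skel : forall u v, adj dir bi u v = path_skel u v.

Definition pathv (i : nat) : 'I_d.+1 := if i is 0 then ord0 else inord (d.+1 - i).

Lemma pathv_val (i : nat) : nat_of_ord (pathv i) = if i is 0 then 0 else d.+1 - i.
Proof. by case: i => //= i; rewrite inordK //; lia. Qed.

Lemma pathv_Xv (j : 'I_d) : pathv (d - j) = Xv j.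
Proof.
apply: val_inj; rewrite /= pathv_val /bump leq0n add1n; have := ltn_ord j.
by case E: (d - j) => [|k] /=; lia.
Qed.

Lemma pathv_adj (k : nat) : k < d -> adj dir bi (pathv k) (pathv k.+1).
Proof. by rewrite skel /path_skel !pathv_val; case: k => [|k] /=; lia. Qed.

Lemma pathv_nbr (k : nat) (w : 'I_d.+1) : k <= d -> adj dir bi (pathv k) w ->
  (0 < k /\ w = pathv k.-1) \/ (k < d /\ w = pathv k.+1).
Proof.
rewrite skel /path_skel => kd kw.
have : (0 < k /\ val w = pathv k.-1) \/ (k < d /\ val w = pathv k.+1).
  by move: kw; rewrite !pathv_val; have := ltn_ord w; case: k kd => [|[|k]] /=; lia.
by case=> [] [? /val_inj ?]; [left | right].
Qed.

Lemma path_forward (q : seq 'I_d.+1) (k : nat) : k <= d ->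
  uniq (pathv k :: q) -> (0 < k -> pathv k.-1 \notin q) ->
  path (adj dir bi) (pathv k) q -> q = map pathv (iota k.+1 (size q)).
Proof.
elim: q k => [//|w q IH] k kd uq no_back /= /andP [kw wq].
case: (pathv_nbr kd kw) => [[k_gt0 ew] | [kd' ew]].
  by move: (no_back k_gt0); rewrite ew inE eqxx.
rewrite ew in uq wq *; congr cons; apply: IH => //.
- by case/andP: uq.
- by move=> _; case/andP: uq; rewrite inE negb_or => /andP [].
Qed.

Lemma pathv_path (m k : nat) : k + m <= d ->
  path (adj dir bi) (pathv k) (map pathv (iota k.+1 m)).
Proof.
elim: m k => [//|m IH] k km /=.
rewrite pathv_adj /=; last lia.
by apply: IH; lia.
Qed.

Lemma pathv_uniq (n : nat) : n <= d -> uniq (map pathv (iota 0 n.+1)).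
Proof.
move=> nd; rewrite map_inj_in_uniq ?iota_uniq // => i j.
rewrite !mem_iota !add0n => ni nj /(congr1 val); rewrite /= !pathv_val.
by case: i ni => [|i]; case: j nj => [|j] /=; lia.
Qed.

Definition Ypath (a : 'I_d) : seq 'I_d.+1 := map pathv (iota 0 (d - a.+1).+2).

Lemma Ypath_is_path (a : 'I_d) : is_path dir bi Yv (Xv a) (Ypath a).
Proof.
have a_lt := ltn_ord a.
exists (map pathv (iota 1 (d - a.+1).+1)); split => //.
- by rewrite -[Yv]/(pathv 0) last_map_iota -pathv_Xv; congr pathv; lia.
- by rewrite -[Yv]/(pathv 0); apply: pathv_path; lia.
- by rewrite -[Yv]/(pathv 0); apply: (@pathv_uniq (d - a.+1).+1); lia.
Qed.

Lemma Ypath_unique (a : 'I_d) (p : seq 'I_d.+1) : is_path dir bi Yv (Xv a) p -> p = Ypath a.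
Proof.
move=> [q [-> q_last q_path q_uniq]].
have eq : q = map pathv (iota 1 (size q)) by apply: (path_forward (leq0n d)).
have q_size : size q = (d - a.+1).+1.
  have := congr1 val q_last; rewrite -[Yv]/(pathv 0) {1}eq last_map_iota /= pathv_val /bump.
  by have := ltn_ord a; case: (size q) => [|m] /=; lia.
by rewrite /Ypath eq q_size.
Qed.

Hypothesis wf : wf_mixed dir bi.

(* indices j of the interior vertices X_(j+1) that are colliders on the skeleton *)
Definition colliders : {set 'I_d} :=
  [set j : 'I_d | (0 < j) &&
     collider dir bi (pathv (d - j).-1) (pathv (d - j)) (pathv (d - j).+1)].

Definition open_at (Z : {set 'I_d.+1}) (a c b : 'I_d.+1) : bool :=
  if collider dir bi a c b then [exists z in Z, anc dir c z] else c \notin Z.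

Lemma collider_sink (k : nat) : k < d ->
  collider dir bi (pathv k.-1) (pathv k) (pathv k.+1) ->
  forall z, anc dir (pathv k) z = (z == pathv k).
Proof.
move=> kd /andP [into_left into_right]; apply: (anc_sink wf) => w.
by case/(pathv_nbr (ltnW kd)) => [] [_ ->].
Qed.

Lemma open_at_pathv (Sc : {set 'I_d}) (j : 'I_d) : 0 < j ->
  open_at (Xv @: Sc) (pathv (d - j).-1) (pathv (d - j)) (pathv (d - j).+1)
  = ((j \in Sc) == (j \in colliders)).
Proof.
move=> j_gt0; have j_lt := ltn_ord j.
rewrite /open_at /colliders inE j_gt0 /=.
case coll: collider; last by rewrite pathv_Xv mem_Xv eqbF_neg.
rewrite eqb_id; apply/existsP/idP => [[z /andP [zZ]] | jSc].
  rewrite (collider_sink _ coll) ?pathv_Xv; last lia.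
  by move=> /eqP ez; rewrite -mem_Xv -ez.
by exists (pathv (d - j)); rewrite /anc connect0 andbT pathv_Xv mem_Xv.
Qed.

Lemma mconnecting_Ypath (Sc : {set 'I_d}) (a : 'I_d) :
  mconnecting dir bi (Xv @: Sc) (Ypath a) =
  [forall j : 'I_d, (a < j) ==> ((j \in Sc) == (j \in colliders))].
Proof.
have -> : mconnecting dir bi (Xv @: Sc) (Ypath a) =
          triples_ok (open_at (Xv @: Sc)) (Ypath a) by [].
rewrite triples_ok_iota.
apply/allP/forallP => [opens j | opens i].
  apply/implyP => aj; have j_lt := ltn_ord j.
  have i_in : (d - j).-1 \in iota 0 (d - a.+1) by rewrite mem_iota; lia.
  by have := opens _ i_in; rewrite prednK ?open_at_pathv //; lia.
rewrite mem_iota add0n => i_lt; have j_lt : d - i.+1 < d by lia.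
have := opens (Ordinal j_lt); rewrite /= (_ : a < d - i.+1) /=; last lia.
rewrite -open_at_pathv /=; last lia.
by have -> : d - (d - i.+1) = i.+1 by lia.
Qed.

Lemma msep_Y_X (Sc : {set 'I_d}) (a : 'I_d) :
  msep dir bi [set Yv] [set Xv a] (Xv @: Sc) <->
  exists2 j : 'I_d, a < j & (j \in Sc) != (j \in colliders).
Proof.
split=> [sep | [j aj mis] x y p].
  have := sep _ _ _ (set11 _) (set11 _) (Ypath_is_path a).
  by rewrite mconnecting_Ypath => /forallPn [j]; rewrite negb_imply => /andP [aj mis]; exists j.
rewrite !inE => /eqP -> /eqP -> /Ypath_unique ->; rewrite mconnecting_Ypath.
by apply/forallPn; exists j; rewrite negb_imply aj.
Qed.

Lemma simG_level (S T : {set 'I_d}) :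
  simG dir bi S T <-> level colliders S = level colliders T.
Proof.
have sepE (Sc : {set 'I_d}) (a : 'I_d) :
    msep dir bi [set Yv] [set Xv a] (Xv @: Sc) <-> a.+1 < level colliders Sc.
  by rewrite -(rwP (level_gtP _ _ _)); exact: msep_Y_X.
rewrite -level_eqP /simG; split=> [] [Sc [sub sep]]; exists Sc; split=> //.
  by move=> a aU; apply/sepE; move/msep_Y_set: sep; apply.
by apply/msep_Y_set => a aU; apply/sepE; apply: sep.
Qed.

End PathSkeleton.

(* The classes of ~_G are the fibres
   of the level map, which takes every value in 0..d. *)
Theorem mainTheorem9 (d : nat) (dir bi : rel 'I_d.+1) :
  0 < d ->
  (is_DAG dir bi \/ is_MAG dir bi) ->
  (forall u v, adj dir bi u v = path_skel u v) ->
  N_G dir bi = d.+1.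
Proof.
move=> d_gt0 G skel; have wf : wf_mixed dir bi by case: G => [[]|[]].
pose C := colliders dir bi.
pose lev (S : {set 'I_d}) : 'I_d.+1 := inord (level C S).
have levK S : nat_of_ord (lev S) = level C S by rewrite inordK // ltnS level_le.
have classE S : [set T | `[< simG dir bi S T >]] = [set T | lev T == lev S].
  apply/setP => T; rewrite !inE -val_eqE /= !levK.
  by apply/asboolP/eqP => [/(simG_level d_gt0 skel wf) | /esym/(simG_level d_gt0 skel wf)].
have levT : [set lev S | S : {set 'I_d}] = setT.
  apply/setP => k; rewrite inE; have [S lS] := level_surj C (ltn_ord k : k <= d).
  by apply/imsetP; exists S => //; apply: val_inj; rewrite /= levK.
by rewrite /N_G (eq_imset _ classE) card_fibres levT cardsT card_ord.
Qed.
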